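(* For $R=\mathbb{Z}_9$ and for $R=\mathbb{S}_3=\mathbb{F}_3[X]/(X^2)$ there exists a $(57,5)$-blocking set in $\mathrm{PHG}(2,R)$, i.e. a set of $57$ points meeting every line in at least $5$ points. Equivalently (taking the complement), there exists a projective $(60,7)$-arc in $\mathrm{PHG}(2,R)$.
   Context: For a finite chain ring $R$ of length $2$ with residue field $\mathbb{F}_q$ (here $q=3$, $|R|=9$), the projective Hjelmslev plane $\mathrm{PHG}(2,R)$ is the incidence structure whose points are the free rank-$1$ submodules of the right module $R_R^3$, whose lines are the free rank-$2$ submodules of $R_R^3$, with incidence given by inclusion; it has $q^4+q^3+q^2$ points ($117$ here) and each line contains $q^2+q$ points ($12$ here). A projective $(k,n)$-arc is a set of $k$ points meeting every line in at most $n$ points. *)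

From HB Require Import structures.
From mathcomp Require Import all_boot all_order all_algebra ring.
Set Implicit Arguments. Unset Strict Implicit. Unset Printing Implicit Defensive.
Import GRing.Theory.
Local Open Scope ring_scope.

(** The ring S_3 = F_3[X]/(X^2), represented as a + b*eps (eps = class of X,
    eps^2 = 0) by the pair (a, b) of elements of F_3. *)
Definition S3 : Type := ('F_3 * 'F_3)%type.
HB.instance Definition _ := Finite.on S3.
HB.instance Definition _ := GRing.Zmodule.on S3.

Definition S3_one : S3 := (1, 0).
Definition S3_mul (x y : S3) : S3 := (x.1 * y.1, x.1 * y.2 + x.2 * y.1).

Lemma S3_mulA : associative S3_mul.
Proof. by case=> a b [c d] [e f]; rewrite /S3_mul /=; congr pair; ring. Qed.
Lemma S3_mulC : commutative S3_mul.
Proof. by case=> a b [c d]; rewrite /S3_mul /=; congr pair; ring. Qed.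
Lemma S3_mul1 : left_id S3_one S3_mul.
Proof. by case=> a b; rewrite /S3_mul /S3_one /=; congr pair; ring. Qed.
Lemma S3_mulDl : left_distributive S3_mul +%R.
Proof.
case=> a b [c d] [e f]; rewrite /S3_mul /=.
transitivity (a * e + c * e, a * f + b * e + (c * f + d * e)); last by [].
by congr pair; ring.
Qed.
Lemma S3_one_neq0 : S3_one != 0.
Proof. by []. Qed.

HB.instance Definition _ := GRing.Zmodule_isComNzRing.Build S3
  S3_mulA S3_mulC S3_mul1 S3_mulDl S3_one_neq0.

(** Projective Hjelmslev plane PHG(2,R) over a finite commutative ring R,
    using the module R^3 as row vectors 'rV[R]_3 (R is commutative, so the
    right module structure is given by scaling).
    A submodule M of R^3 is free of rank 1 iff it has a basis {x}, i.e.
    M = xR and r |-> x r is injective; free of rank 2 iff it has a basis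
    {x, y}, i.e. M = xR + yR and (r, s) |-> x r + y s is injective. *)
Section PHG.
Variable R : finComNzRingType.
Notation V := 'rV[R]_3.

Definition span1 (x : V) : {set V} := [set r *: x | r : R].
Definition span2 (x y : V) : {set V} := [set r *: x + s *: y | r : R, s : R].

Definition is_point (P : {set V}) : Prop :=
  exists x : V, P = span1 x /\ injective (fun r : R => r *: x).

Definition is_line (L : {set V}) : Prop :=
  exists x y : V, L = span2 x y /\
    injective (fun rs : R * R => rs.1 *: x + rs.2 *: y).

Definition on_line (S : {set {set V}}) (L : {set V}) : {set {set V}} :=
  [set P in S | P \subset L].

Definition blocking_set (k n : nat) (B : {set {set V}}) : Prop :=
  (forall P, P \in B -> is_point P) /\ #|B| = k /\
  (forall L, is_line L -> n <= #|on_line B L|)%N.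

Definition proj_arc (k n : nat) (A : {set {set V}}) : Prop :=
  (forall P, P \in A -> is_point P) /\ #|A| = k /\
  (forall L, is_line L -> #|on_line A L| <= n)%N.
End PHG.

From HB Require Import structures.
From mathcomp Require Import all_boot all_algebra ring.
Set Implicit Arguments. Unset Strict Implicit. Unset Printing Implicit Defensive.
Import GRing.Theory.
Local Open Scope ring_scope.

(* A line xR + yR of PHG(2,R) is the kernel of the linear form v |-> v . (x * y),
   x * y being the cross product: it lies in that kernel, and as x, y are free
   the cross product has a unit coordinate, so the kernel has |R|^2 elements,
   as many as the line.  The unit coordinate is found through an element t != 0
   killing every zero divisor (t = 3 in Z_9, t = X in S_3): if t annihilated
   x * y, the identity (x * y) * z = (x . z) y - (y . z) x would give the
   relation -t(y . z) x + t(x . z) y = 0, forcing t x = 0.  Hence the points vR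
   on a line are those with v . w = 0 for a unimodular w, and the blocking and
   arc properties of the explicit point sets below become a finite computation
   over all w in R^3. *)

Definition o0 : 'I_3 := @Ordinal 3 0 isT.
Definition o1 : 'I_3 := @Ordinal 3 1 isT.
Definition o2 : 'I_3 := @Ordinal 3 2 isT.

Lemma ord3P (i : 'I_3) : [\/ i = o0, i = o1 | i = o2].
Proof.
case: i => [[|[|[|//]]] lt_i3];
  [apply: Or31 | apply: Or32 | apply: Or33]; exact: val_inj.
Qed.

Section Hjelmslev.
Variable R : finComNzRingType.
Notation V := 'rV[R]_3.

Definition vec3 (a b c : R) : V := \row_j [:: a; b; c]`_j.

Definition dot (v w : V) : R := \sum_i v 0 i * w 0 i.

Lemma dotE (v w : V) : dot v w = v 0 o0 * w 0 o0 + v 0 o1 * w 0 o1 + v 0 o2 * w 0 o2.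
Proof.
rewrite /dot !big_ord_recr big_ord0 /= add0r.
by congr (v 0 _ * w 0 _ + v 0 _ * w 0 _ + v 0 _ * w 0 _); apply: val_inj.
Qed.

Lemma dotDl (x y w : V) : dot (x + y) w = dot x w + dot y w.
Proof. by rewrite /dot -big_split; apply: eq_bigr => i _; rewrite mxE mulrDl. Qed.

Lemma dotZl r (v w : V) : dot (r *: v) w = r * dot v w.
Proof. by rewrite /dot mulr_sumr; apply: eq_bigr => i _; rewrite mxE mulrA. Qed.

Lemma dot_delta (v : V) i : dot v (delta_mx 0 i) = v 0 i.
Proof.
rewrite /dot (bigD1 i) //= big1 => [|j /negbTE ji]; rewrite mxE ?ji ?eqxx /=.
  by rewrite mulr1 addr0.
by rewrite mulr0.
Qed.

Definition hyperplane (w : V) : {set V} := [set v | dot v w == 0].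

Definition cross (x y : V) : V :=
  vec3 (x 0 o1 * y 0 o2 - x 0 o2 * y 0 o1)
       (x 0 o2 * y 0 o0 - x 0 o0 * y 0 o2)
       (x 0 o0 * y 0 o1 - x 0 o1 * y 0 o0).

Lemma dot_cross_l (x y : V) : dot x (cross x y) = 0.
Proof. by rewrite dotE !mxE /=; ring. Qed.

Lemma dot_cross_r (x y : V) : dot y (cross x y) = 0.
Proof. by rewrite dotE !mxE /=; ring. Qed.

Lemma crossZl r (x y : V) : cross (r *: x) y = r *: cross x y.
Proof. by apply/rowP=> j; have [] := ord3P j => ->; rewrite !mxE /=; ring. Qed.

Lemma cross_crossl (x y z : V) : cross (cross x y) z = dot x z *: y - dot y z *: x.
Proof. by apply/rowP=> j; have [] := ord3P j => ->; rewrite !dotE !mxE /=; ring. Qed.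

Lemma card_span2 (x y : V) :
  injective (fun rs : R * R => rs.1 *: x + rs.2 *: y) -> #|span2 x y| = (#|R| ^ 2)%N.
Proof.
move=> inj.
suff -> : span2 x y = [set (fun rs : R * R => rs.1 *: x + rs.2 *: y) rs | rs : R * R].
  by rewrite card_imset // card_prod mulnn.
by apply/setP=> v; apply/imset2P/imsetP=> [[r s _ _ ->] | [[r s] _ ->]];
  [exists (r, s) | exists r s].
Qed.

(* Then t * a != 0 holds exactly for the units a of R, so [unimodular v] says
   that v has a unit coordinate. *)
Variable t : R.
Hypothesis t_neq0 : t != 0.
Hypothesis t_kills_zero_divisors : forall a d : R, t * a != 0 -> a * d = 0 -> d = 0.

Definition unimodular (v : V) : bool := [exists i, t * v 0 i != 0].

Lemma span1_point (v : V) : unimodular v -> is_point (span1 v).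
Proof.
case/existsP=> i ti; exists v; split=> // r s /(congr1 (fun u : V => u 0 i)) /eqP.
rewrite !mxE -subr_eq0 -mulrBl mulrC => /eqP /(t_kills_zero_divisors ti) /eqP.
by rewrite subr_eq0 => /eqP.
Qed.

Lemma card_hyperplane (w : V) : unimodular w -> (#|hyperplane w| <= #|R| ^ 2)%N.
Proof.
case/existsP=> k tk; pose f (v : V) := [ffun j : 'I_2 => v 0 (lift k j)].
suff f_inj : {in hyperplane w &, injective f}.
  by rewrite -(card_in_imset f_inj) (leq_trans (max_card _)) // card_ffun card_ord.
move=> u v; rewrite !inE => /eqP u0 /eqP v0 /ffunP fuv.
have uv j : j != k -> u 0 j = v 0 j.
  by case: (unliftP k j) => [j' -> _ | -> /eqP //]; have := fuv j'; rewrite !ffunE.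
have : dot (u - v) w = 0 by rewrite -scaleN1r dotDl dotZl u0 v0 mulr0 addr0.
rewrite /dot (bigD1 k) //= big1 => [|j /uv]; last first.
  by rewrite !mxE => ->; rewrite subrr mul0r.
rewrite addr0 mulrC => /(t_kills_zero_divisors tk) /eqP.
rewrite !mxE subr_eq0 => /eqP ukv.
by apply/rowP=> j; case: (eqVneq j k) => [-> | /uv].
Qed.

Lemma cross_unimodular (x y : V) :
  injective (fun rs : R * R => rs.1 *: x + rs.2 *: y) -> unimodular (cross x y).
Proof.
move=> inj; apply: contraT; rewrite negb_exists => /forallP tc.
have indep r s : r *: x + s *: y = 0 -> r = 0 /\ s = 0.
  move=> rs0; suff [-> ->] : (r, s) = (0, 0) by [].
  by apply: inj; rewrite /= rs0 !scale0r addr0.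
have t_cross : t *: cross x y = 0.
  by apply/rowP=> k; rewrite [LHS]mxE [RHS]mxE; apply/eqP/negPn/tc.
have tx z : t * dot x z = 0.
  have : (- (t * dot y z)) *: x + (t * dot x z) *: y = 0.
    rewrite addrC scaleNr -!scalerA -scalerBr -cross_crossl -crossZl t_cross.
    by rewrite -(scale0r 0) crossZl !scale0r.
  by case/indep.
have : t *: x + 0 *: y = 0.
  by apply/rowP=> i; rewrite !mxE mul0r addr0 -(dot_delta x i) tx.
by case/indep => /eqP; rewrite (negbTE t_neq0).
Qed.

Lemma line_hyperplane L : is_line L -> exists2 w, unimodular w & L = hyperplane w.
Proof.
case=> x [y [-> inj]]; exists (cross x y); first exact: cross_unimodular.
apply/eqP; rewrite eqEcard card_span2 // card_hyperplane ?andbT;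
  last exact: cross_unimodular.
apply/subsetP=> _ /imset2P[r s _ _ ->].
by rewrite inE dotDl !dotZl dot_cross_l dot_cross_r !mulr0 addr0.
Qed.

Lemma span1_eq_scale (u v : V) : span1 u = span1 v -> exists r, u = r *: v.
Proof.
have : u \in span1 u by apply/imsetP; exists 1; rewrite ?scale1r.
by move=> + uv; rewrite uv => /imsetP[r _ ->]; exists r.
Qed.

Definition points (S : seq V) : {set {set V}} := [set span1 v | v in S].

Lemma span1_sub_hyperplane (v w : V) : (span1 v \subset hyperplane w) = (dot v w == 0).
Proof.
apply/subsetP/idP=> [sub | /eqP vw0 _ /imsetP[r _ ->]].
  by have := sub v; rewrite inE; apply; apply/imsetP; exists 1; rewrite ?scale1r.
by rewrite inE dotZl vw0 mulr0.
Qed.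

Lemma points_point S P : all unimodular S -> P \in points S -> is_point P.
Proof. by move=> /allP uniS /imsetP[v vS ->]; apply/span1_point/uniS. Qed.

Section Points.
Variable S : seq V.
Hypotheses (S_uniq : uniq S) (span1_inj : {in S &, injective (@span1 R)}).

Lemma card_points : #|points S| = size S.
Proof. by rewrite card_in_imset // (card_uniqP S_uniq). Qed.

Lemma card_on_line_hyperplane w :
  #|on_line (points S) (hyperplane w)| = count (fun v => dot v w == 0) S.
Proof.
have -> : on_line (points S) (hyperplane w) = points [seq v <- S | dot v w == 0].
  apply/setP=> P; rewrite inE; apply/andP/imsetP=> [[/imsetP[v vS ->]] | [v]].
    by rewrite span1_sub_hyperplane => vw; exists v; rewrite // mem_filter vw.
  rewrite mem_filter => /andP[vw vS] ->.
  by rewrite span1_sub_hyperplane vw; split=> //; apply/imsetP; exists v.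
rewrite card_in_imset => [|u v]; last first.
  by rewrite !mem_filter => /andP[_ uS] /andP[_ vS]; apply: span1_inj.
by rewrite (card_uniqP _) ?filter_uniq // size_filter.
Qed.

Lemma card_on_line L : is_line L ->
  exists2 w, unimodular w & #|on_line (points S) L| = count (fun v => dot v w == 0) S.
Proof. by case/line_hyperplane=> w uw ->; exists w; rewrite ?card_on_line_hyperplane. Qed.

End Points.

End Hjelmslev.

(* The final verification runs by vm_compute, under which the locked matrix and
   cardinality operations (and [enum R]) do not reduce: it works on coordinate
   triples and on an explicit enumeration E of R. *)
Section Check.
Variable R : finComNzRingType.
Variable E : seq R.
Hypothesis mem_E : forall a : R, a \in E.
Notation V := 'rV[R]_3.
Notation T3 := (R * R * R)%type.

Definition vec_of (p : T3) : V := vec3 p.1.1 p.1.2 p.2.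
Definition dot3 (p w : T3) : R := p.1.1 * w.1.1 + p.1.2 * w.1.2 + p.2 * w.2.
Definition scale3 (r : R) (p : T3) : T3 := (r * p.1.1, r * p.1.2, r * p.2).
Definition unimodular3 (t : R) (p : T3) : bool :=
  [|| t * p.1.1 != 0, t * p.1.2 != 0 | t * p.2 != 0].

Definition coords (v : V) : T3 := (v 0 o0, v 0 o1, v 0 o2).

Lemma vec_ofK : cancel vec_of coords.
Proof. by move=> [[a b] c]; rewrite /coords !mxE. Qed.

Lemma coordsK : cancel coords vec_of.
Proof. by move=> v; apply/rowP=> j; have [] := ord3P j => ->; rewrite mxE. Qed.

Lemma scale_vec_of r p : r *: vec_of p = vec_of (scale3 r p).
Proof. by apply/rowP=> j; have [] := ord3P j => ->; rewrite !mxE. Qed.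

Lemma dot_vec_of p w : dot (vec_of p) (vec_of w) = dot3 p w.
Proof. by rewrite dotE !mxE. Qed.

Lemma unimodular_vec_of t p : unimodular t (vec_of p) = unimodular3 t p.
Proof.
apply/existsP/or3P=> [[j] | [] tp].
- have [] := ord3P j => ->; rewrite mxE => tp;
    [exact: Or31 | exact: Or32 | exact: Or33].
- by exists o0; rewrite mxE.
- by exists o1; rewrite mxE.
- by exists o2; rewrite mxE.
Qed.

Definition all3 (P : pred T3) : bool :=
  all (fun a => all (fun b => all (fun c => P (a, b, c)) E) E) E.

Lemma all3P P : all3 P -> forall w, P w.
Proof.
move=> /allP P3 [[a b] c].
by move/allP: (P3 a (mem_E a)) => /(_ b (mem_E b)) /allP; apply.
Qed.

Definition points_check (t : R) (ok : nat -> bool) (S : seq T3) : bool :=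
  [&& t != 0,
      all (fun a => all (fun d => (t * a != 0) ==> (a * d == 0) ==> (d == 0)) E) E,
      uniq S, all (unimodular3 t) S,
      all (fun p => all (fun q => all (fun r => (p == scale3 r q) ==> (p == q)) E) S) S &
      all3 (fun w => unimodular3 t w ==> ok (count (fun p => dot3 p w == 0) S))].

Lemma points_check_sound t ok S : points_check t ok S ->
  [/\ forall P, P \in points (map vec_of S) -> is_point P,
      #|points (map vec_of S)| = size S &
      forall L, is_line L -> ok #|on_line (points (map vec_of S)) L|].
Proof.
case/and5P=> t_neq0 tE S_uniq S_uni /andP[S_free S_ok].
have t_kills_zero_divisors a d : t * a != 0 -> a * d = 0 -> d = 0.
  move=> ta ad; move/allP: tE => /(_ a (mem_E a)) /allP /(_ d (mem_E d)).
  by rewrite ta ad eqxx => /eqP.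
have vS_uniq : uniq (map vec_of S) by rewrite map_inj_uniq //; apply: can_inj vec_ofK.
have span1_inj : {in map vec_of S &, injective (@span1 R)}.
  move=> _ _ /mapP[p pS ->] /mapP[q qS ->] /span1_eq_scale[r].
  rewrite scale_vec_of => /(can_inj vec_ofK) pq; congr vec_of; apply/eqP.
  move/allP: S_free => /(_ p pS) /allP /(_ q qS) /allP /(_ r (mem_E r)).
  by move/implyP; apply; rewrite pq.
split.
- move=> P; apply: (points_point t_kills_zero_divisors).
  by rewrite all_map; apply: sub_all S_uni => p; rewrite /= unimodular_vec_of.
- by rewrite card_points ?size_map.
move=> L /(card_on_line t_neq0 t_kills_zero_divisors vS_uniq span1_inj)[w uw ->].
rewrite -[w]coordsK count_map unimodular_vec_of in uw *.
under eq_count do rewrite /= dot_vec_of.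
exact: (implyP (all3P S_ok _) uw).
Qed.

Lemma blocking_set_of_check t k n S : points_check t (leq n) S -> size S = k ->
  blocking_set k n (points (map vec_of S)).
Proof. by move=> /points_check_sound[pts card lines] <-. Qed.

Lemma proj_arc_of_check t k n S : points_check t (fun c => c <= n)%N S -> size S = k ->
  proj_arc k n (points (map vec_of S)).
Proof. by move=> /points_check_sound[pts card lines] <-. Qed.

End Check.

Definition enum_Z9 : seq 'Z_9 := [seq i%:R | i <- iota 0 9].

Lemma mem_enum_Z9 (a : 'Z_9) : a \in enum_Z9.
Proof. by apply/mapP; exists (val a); rewrite ?natr_Zp // mem_iota ltn_ord. Qed.

Definition Z9_of (p : nat * nat * nat) : 'Z_9 * 'Z_9 * 'Z_9 :=
  (p.1.1%:R, p.1.2%:R, p.2%:R).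

Definition blocking_Z9 := map Z9_of [::
  (0, 1, 1); (0, 1, 2); (0, 1, 3); (0, 1, 5); (0, 1, 7); (1, 0, 1); (1, 0, 2);
  (1, 0, 4); (1, 0, 5); (1, 1, 0); (1, 1, 3); (1, 1, 7); (1, 1, 8); (1, 2, 0);
  (1, 2, 4); (1, 2, 5); (1, 2, 6); (1, 3, 0); (1, 3, 1); (1, 3, 3); (1, 3, 5);
  (1, 3, 6); (1, 3, 7); (1, 3, 8); (1, 4, 2); (1, 4, 3); (1, 4, 4); (1, 4, 6);
  (1, 5, 0); (1, 5, 2); (1, 5, 3); (1, 5, 7); (1, 6, 2); (1, 6, 4); (1, 6, 7);
  (1, 6, 8); (1, 7, 0); (1, 7, 1); (1, 7, 5); (1, 7, 6); (1, 8, 1); (1, 8, 3);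
  (1, 8, 6); (1, 8, 8); (3, 0, 1); (3, 1, 1); (3, 1, 3); (3, 1, 4); (3, 1, 5);
  (3, 1, 8); (3, 2, 4); (3, 2, 5); (3, 2, 6); (3, 2, 7); (3, 2, 8); (3, 3, 1);
  (3, 6, 1)]%N.

Definition arc_Z9 := map Z9_of [::
  (0, 0, 1); (0, 1, 0); (0, 1, 4); (0, 1, 6); (0, 1, 8); (0, 3, 1); (0, 3, 2);
  (1, 0, 0); (1, 0, 3); (1, 0, 6); (1, 0, 7); (1, 0, 8); (1, 1, 1); (1, 1, 2);
  (1, 1, 4); (1, 1, 5); (1, 1, 6); (1, 2, 1); (1, 2, 2); (1, 2, 3); (1, 2, 7);
  (1, 2, 8); (1, 3, 2); (1, 3, 4); (1, 4, 0); (1, 4, 1); (1, 4, 5); (1, 4, 7);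
  (1, 4, 8); (1, 5, 1); (1, 5, 4); (1, 5, 5); (1, 5, 6); (1, 5, 8); (1, 6, 0);
  (1, 6, 1); (1, 6, 3); (1, 6, 5); (1, 6, 6); (1, 7, 2); (1, 7, 3); (1, 7, 4);
  (1, 7, 7); (1, 7, 8); (1, 8, 0); (1, 8, 2); (1, 8, 4); (1, 8, 5); (1, 8, 7);
  (3, 0, 2); (3, 1, 0); (3, 1, 2); (3, 1, 6); (3, 1, 7); (3, 2, 0); (3, 2, 1);
  (3, 2, 2); (3, 2, 3); (3, 3, 2); (3, 6, 2)]%N.

Definition enum_F3 : seq 'F_3 := [seq i%:R | i <- iota 0 3].

Definition enum_S3 : seq S3 := [seq (a, b) | a <- enum_F3, b <- enum_F3].

Lemma mem_enum_S3 (a : S3) : a \in enum_S3.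
Proof.
have mem_F3 (c : 'F_3) : c \in enum_F3.
  by apply/mapP; exists (val c); rewrite ?natr_Zp // mem_iota ltn_ord.
by case: a => a b; apply/allpairsP; exists (a, b); rewrite !mem_F3.
Qed.

Definition S3_of (ab : nat * nat) : S3 := (ab.1%:R, ab.2%:R).

Definition S3_of3 (p : (nat * nat) * (nat * nat) * (nat * nat)) : S3 * S3 * S3 :=
  (S3_of p.1.1, S3_of p.1.2, S3_of p.2).

Definition blocking_S3 := map S3_of3 [::
  ((0, 0), (0, 0), (1, 0)); ((0, 0), (1, 0), (0, 0)); ((0, 0), (1, 0), (1, 2));
  ((0, 0), (1, 0), (2, 0)); ((0, 0), (1, 0), (2, 1)); ((0, 1), (0, 2), (1, 0));
  ((0, 1), (0, 2), (2, 0)); ((0, 1), (1, 0), (0, 2)); ((0, 1), (1, 0), (1, 0));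
  ((0, 1), (1, 0), (2, 0)); ((0, 1), (1, 0), (2, 1)); ((0, 1), (2, 0), (0, 2));
  ((0, 1), (2, 0), (1, 0)); ((0, 1), (2, 0), (1, 2)); ((0, 1), (2, 0), (2, 2));
  ((1, 0), (0, 0), (0, 0)); ((1, 0), (0, 0), (1, 1)); ((1, 0), (0, 0), (2, 0));
  ((1, 0), (0, 0), (2, 2)); ((1, 0), (0, 1), (0, 2)); ((1, 0), (0, 1), (1, 0));
  ((1, 0), (0, 1), (2, 0)); ((1, 0), (0, 1), (2, 2)); ((1, 0), (0, 2), (0, 1));
  ((1, 0), (0, 2), (1, 2)); ((1, 0), (0, 2), (2, 0)); ((1, 0), (0, 2), (2, 2));
  ((1, 0), (1, 0), (0, 1)); ((1, 0), (1, 0), (1, 1)); ((1, 0), (1, 0), (2, 0));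
  ((1, 0), (1, 0), (2, 1)); ((1, 0), (1, 1), (0, 2)); ((1, 0), (1, 1), (1, 0));
  ((1, 0), (1, 1), (2, 0)); ((1, 0), (1, 1), (2, 2)); ((1, 0), (1, 2), (0, 0));
  ((1, 0), (1, 2), (1, 2)); ((1, 0), (1, 2), (2, 1)); ((1, 0), (1, 2), (2, 2));
  ((1, 0), (2, 0), (0, 0)); ((1, 0), (2, 0), (0, 1)); ((1, 0), (2, 0), (0, 2));
  ((1, 0), (2, 0), (1, 0)); ((1, 0), (2, 0), (1, 1)); ((1, 0), (2, 0), (1, 2));
  ((1, 0), (2, 0), (2, 0)); ((1, 0), (2, 0), (2, 2)); ((1, 0), (2, 1), (0, 0));
  ((1, 0), (2, 1), (0, 1)); ((1, 0), (2, 1), (0, 2)); ((1, 0), (2, 1), (1, 0));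
  ((1, 0), (2, 1), (1, 1)); ((1, 0), (2, 1), (1, 2)); ((1, 0), (2, 1), (2, 0));
  ((1, 0), (2, 1), (2, 2)); ((1, 0), (2, 2), (2, 0)); ((1, 0), (2, 2), (2, 2))]%N.

Definition arc_S3 := map S3_of3 [::
  ((0, 0), (0, 1), (1, 0)); ((0, 0), (0, 1), (2, 0)); ((0, 0), (1, 0), (0, 1));
  ((0, 0), (1, 0), (0, 2)); ((0, 0), (1, 0), (1, 0)); ((0, 0), (1, 0), (1, 1));
  ((0, 0), (1, 0), (2, 2)); ((0, 1), (0, 0), (1, 0)); ((0, 1), (0, 0), (2, 0));
  ((0, 1), (0, 1), (1, 0)); ((0, 1), (0, 1), (2, 0)); ((0, 1), (1, 0), (0, 0));
  ((0, 1), (1, 0), (0, 1)); ((0, 1), (1, 0), (1, 1)); ((0, 1), (1, 0), (1, 2));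
  ((0, 1), (1, 0), (2, 2)); ((0, 1), (2, 0), (0, 0)); ((0, 1), (2, 0), (0, 1));
  ((0, 1), (2, 0), (1, 1)); ((0, 1), (2, 0), (2, 0)); ((0, 1), (2, 0), (2, 1));
  ((1, 0), (0, 0), (0, 1)); ((1, 0), (0, 0), (0, 2)); ((1, 0), (0, 0), (1, 0));
  ((1, 0), (0, 0), (1, 2)); ((1, 0), (0, 0), (2, 1)); ((1, 0), (0, 1), (0, 0));
  ((1, 0), (0, 1), (0, 1)); ((1, 0), (0, 1), (1, 1)); ((1, 0), (0, 1), (1, 2));
  ((1, 0), (0, 1), (2, 1)); ((1, 0), (0, 2), (0, 0)); ((1, 0), (0, 2), (0, 2));
  ((1, 0), (0, 2), (1, 0)); ((1, 0), (0, 2), (1, 1)); ((1, 0), (0, 2), (2, 1));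
  ((1, 0), (1, 0), (0, 0)); ((1, 0), (1, 0), (0, 2)); ((1, 0), (1, 0), (1, 0));
  ((1, 0), (1, 0), (1, 2)); ((1, 0), (1, 0), (2, 2)); ((1, 0), (1, 1), (0, 0));
  ((1, 0), (1, 1), (0, 1)); ((1, 0), (1, 1), (1, 1)); ((1, 0), (1, 1), (1, 2));
  ((1, 0), (1, 1), (2, 1)); ((1, 0), (1, 2), (0, 1)); ((1, 0), (1, 2), (0, 2));
  ((1, 0), (1, 2), (1, 0)); ((1, 0), (1, 2), (1, 1)); ((1, 0), (1, 2), (2, 0));
  ((1, 0), (2, 0), (2, 1)); ((1, 0), (2, 1), (2, 1)); ((1, 0), (2, 2), (0, 0));
  ((1, 0), (2, 2), (0, 1)); ((1, 0), (2, 2), (0, 2)); ((1, 0), (2, 2), (1, 0));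
  ((1, 0), (2, 2), (1, 1)); ((1, 0), (2, 2), (1, 2)); ((1, 0), (2, 2), (2, 1))]%N.

Definition three : 'Z_9 := 3%:R.

Definition eps : S3 := (0, 1).

Local Close Scope ring_scope.

Theorem theorem3p5 :
  ((exists B : {set {set 'rV['Z_9]_3}}, blocking_set 57 5 B) /\
   (exists A : {set {set 'rV['Z_9]_3}}, proj_arc 60 7 A)) /\
  ((exists B : {set {set 'rV[S3]_3}}, blocking_set 57 5 B) /\
   (exists A : {set {set 'rV[S3]_3}}, proj_arc 60 7 A)).
Proof.
split; split; eexists.
- by apply: (blocking_set_of_check mem_enum_Z9 (t := three) (S := blocking_Z9)); vm_compute.
- by apply: (proj_arc_of_check mem_enum_Z9 (t := three) (S := arc_Z9)); vm_compute.
- by apply: (blocking_set_of_check mem_enum_S3 (t := eps) (S := blocking_S3)); vm_compute.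
- by apply: (proj_arc_of_check mem_enum_S3 (t := eps) (S := arc_S3)); vm_compute.
Qed.
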